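(* Let $r\ge5$. If $T$ is a $K_r$-tree then $\langle T\rangle_{K_r}=T$, i.e., $T$ is $K_r$-stable.
   Context: A graph $T$ is a $K_r$-tree of order $\vartheta$ if it is the union of $\vartheta$ copies $H_1,\dots,H_\vartheta$ of $K_r$ such that, for every $1<i\le\vartheta$, $H_i$ shares exactly one edge with $H_1\cup\cdots\cup H_{i-1}$ (the common vertices being exactly the two endpoints of that edge). For a graph $G$, the $K_r$-dynamics repeatedly adds an edge $e$ between two vertices of $G$ whenever there is a copy of $K_r$ in which $e$ is the only edge not yet present; $\langle G\rangle_{K_r}$ is the final graph. *)

From mathcomp Require Import all_boot.
Set Implicit Arguments. Unset Strict Implicit. Unset Printing Implicit Defensive.

(* A simple graph on a finite vertex type V is given by an edge relation
   e : rel V (for K_r-trees symmetry/irreflexivity follow from the definition). *)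

(* The graph on V is a K_r-tree of order #|Hs| = size Hs: Hs is the list of
   vertex sets of the copies H_1, ..., H_theta of K_r (0-indexed here).  *)
Definition is_Kr_tree (V : finType) (r : nat) (e : rel V) : Prop :=
  exists Hs : seq {set V},
    [/\ Hs <> [::],
        (forall H, H \in Hs -> #|H| = r),
        (forall x : V, exists2 H, H \in Hs & x \in H),
        (forall x y : V, e x y <-> (x != y /\ exists2 H, H \in Hs & (x \in H) && (y \in H)))
      & (* each later copy shares exactly one edge (exactly two vertices, which
           are adjacent in the union of the earlier copies) with the earlier ones *)
        (forall i, 0 < i < size Hs ->
           let P := \bigcup_(j < i) nth set0 Hs j in
           #|nth set0 Hs i :&: P| = 2 /\
           exists2 j, j < i & (nth set0 Hs i :&: P) \subset nth set0 Hs j)].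

(* The final graph <G>_{K_r} of the K_r-dynamics: the least edge relation
   containing e that is closed under adding an edge xy whenever some copy of
   K_r (vertex set S, |S| = r, containing x and y) has all its other edges. *)
Inductive Kr_closure (V : finType) (r : nat) (e : rel V) : V -> V -> Prop :=
| Krc_base x y : e x y -> Kr_closure r e x y
| Krc_step (S : {set V}) x y :
    #|S| = r -> x \in S -> y \in S -> x != y ->
    (forall u v, u \in S -> v \in S -> u != v ->
       ~ ((u == x) && (v == y) || (u == y) && (v == x)) ->
       Kr_closure r e u v) ->
    Kr_closure r e x y.

From mathcomp Require Import all_boot zify.
Set Implicit Arguments. Unset Strict Implicit. Unset Printing Implicit Defensive.

(* Any two copies of a K_r-tree meet in at most two vertices, and every clique
   of the tree lies inside a single copy (induction on the number of copies: a
   clique meeting the new copy outside the earlier ones lies in the new copy,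
   while one inside the earlier ones can only use the new copy through the
   glued edge, which already belongs to an earlier copy).  If the dynamics
   adds xy through a vertex set S of size r, then S - x and S - y are cliques
   of size r - 1, hence lie in copies H and H'; these share the r - 2 >= 3
   vertices of S - {x, y}, so H = H' and xy is already an edge. *)

Section KrTreeCopies.

Variables (V : finType) (Hs : seq {set V}).

Local Notation H i := (nth set0 Hs i).

Definition prefix_union (i : nat) : {set V} := \bigcup_(j < i) H j.

Definition in_common_copy (n : nat) (x y : V) : Prop :=
  exists2 i, i < n & (x \in H i) && (y \in H i).

Definition prefix_clique (n : nat) (K : {set V}) : Prop :=
  {in K &, forall x y, x != y -> in_common_copy n x y}.

Hypothesis glued : forall i, 0 < i < size Hs ->
  let P := prefix_union i in
  #|H i :&: P| = 2 /\ exists2 j, j < i & (H i :&: P) \subset H j.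

Lemma mem_prefix_union i (x : V) :
  reflect (exists2 j, j < i & x \in H j) (x \in prefix_union i).
Proof.
apply: (iffP bigcupP) => [[j _ xj]|[j lt_ji xj]]; first by exists j.
by exists (Ordinal lt_ji).
Qed.

Lemma card_copyI_le2 i j :
  i != j -> i < size Hs -> j < size Hs -> #|H i :&: H j| <= 2.
Proof.
move=> ij lt_is lt_js.
wlog lt_ij : i j ij lt_is lt_js / i < j => [le_sym|].
  have [lt_ij | lt_ji | eq_ij] := ltngtP i j; first exact: le_sym.
    by rewrite setIC le_sym // eq_sym.
  by rewrite eq_ij eqxx in ij.
have j_range : 0 < j < size Hs by rewrite lt_js (leq_ltn_trans _ lt_ij).
have [<- _] := glued j_range.
rewrite setIC subset_leq_card // setIS //.
by apply/subsetP=> z zi; apply/mem_prefix_union; exists i.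
Qed.

Lemma in_common_copy_prefix n (x y : V) :
    n < size Hs -> x \in prefix_union n -> y \in prefix_union n ->
  in_common_copy n.+1 x y -> in_common_copy n x y.
Proof.
move=> lt_ns xP yP [i]; rewrite ltnS leq_eqVlt.
case/orP=> [/eqP-> | lt_in] xyi; last by exists i.
have [n0 | n_gt0] := posnP n.
  by case/mem_prefix_union: xP => j; rewrite n0.
have n_range : 0 < n < size Hs by rewrite n_gt0.
have [_ [j lt_jn glue_j]] := glued n_range.
case/andP: xyi => xn yn.
by exists j; rewrite // !(subsetP glue_j) // inE ?xn ?yn.
Qed.

Lemma prefix_clique_sub_last n (K : {set V}) w :
    1 < #|K| -> prefix_clique n.+1 K -> w \in K -> w \notin prefix_union n ->
  K \subset H n.
Proof.
move=> K_gt1 K_clique wK wP.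
have w_copy z : z \in K -> z != w -> (w \in H n) && (z \in H n).
  move=> zK zw; have [i] := K_clique w z wK zK (contra_neq esym zw).
  rewrite ltnS leq_eqVlt => /orP[/eqP-> // | lt_in] /andP[wi _].
  by case/negP: wP; apply/mem_prefix_union; exists i.
have [z zK zw] : exists2 z, z \in K & z != w.
  have [a [b [aK bK ab]]] := card_gt1P K_gt1.
  have [aw | aw] := eqVneq a w; last by exists a.
  by exists b; rewrite // -aw eq_sym.
apply/subsetP=> u uK; have [-> | uw] := eqVneq u w.
  by case/andP: (w_copy z zK zw).
by case/andP: (w_copy u uK uw).
Qed.

Lemma prefix_clique_sub_copy n (K : {set V}) :
    n <= size Hs -> 1 < #|K| -> prefix_clique n K ->
  exists2 i, i < n & K \subset H i.
Proof.
elim: n K => [|n IH] K le_ns K_gt1 K_clique.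
  have [a [b [aK bK ab]]] := card_gt1P K_gt1.
  by have [] := K_clique a b aK bK ab.
have [KP | /subsetPn[w wK wP]] := boolP (K \subset prefix_union n); last first.
  by exists n => //; apply: prefix_clique_sub_last wK wP.
have [i lt_in Ki] : exists2 i, i < n & K \subset H i.
  apply: IH => [|//|x y xK yK xy]; first exact: ltnW.
  apply: in_common_copy_prefix (K_clique x y xK yK xy);
    by rewrite ?(subsetP KP).
by exists i; first exact: ltnW.
Qed.

Lemma in_common_copy_of_cliquesD1 (S : {set V}) x y :
    5 <= #|S| -> x \in S -> y \in S -> x != y ->
    prefix_clique (size Hs) (S :\ x) -> prefix_clique (size Hs) (S :\ y) ->
  in_common_copy (size Hs) x y.
Proof.
move=> S_ge5 xS yS xy Sx_clique Sy_clique; have yx : y != x by rewrite eq_sym.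
have cardSD1 z : z \in S -> #|S :\ z| = #|S|.-1 by rewrite (cardsD1 z S) => ->.
have Sx_gt1 : 1 < #|S :\ x| by rewrite cardSD1 //; lia.
have Sy_gt1 : 1 < #|S :\ y| by rewrite cardSD1 //; lia.
have [i lt_is Sx_i] := prefix_clique_sub_copy (leqnn _) Sx_gt1 Sx_clique.
have [j lt_js Sy_j] := prefix_clique_sub_copy (leqnn _) Sy_gt1 Sy_clique.
have [eq_ij | ij] := eqVneq i j.
  rewrite -eq_ij in Sy_j; exists i => //.
  by rewrite (subsetP Sy_j) ?(subsetP Sx_i) // !inE ?xy ?yx ?xS ?yS.
suff : 3 <= #|H i :&: H j| by rewrite leqNgt ltnS card_copyI_le2.
have Sxy_ij : S :\ x :\ y \subset H i :&: H j.
  apply/subsetP=> z; rewrite !inE => /and3P[zy zx zS].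
  by rewrite (subsetP Sx_i) ?(subsetP Sy_j) // !inE ?zx ?zy.
apply: leq_trans (subset_leq_card Sxy_ij).
by have := cardsD1 y (S :\ x); rewrite cardSD1 // !inE yx yS; lia.
Qed.

End KrTreeCopies.

Theorem lemma4p13 (V : finType) (r : nat) (e : rel V) :
  5 <= r -> is_Kr_tree r e ->
  forall x y : V, Kr_closure r e x y <-> e x y.
Proof.
move=> r_ge5 [Hs [_ _ _ edgeE glued]] x y; split; last exact: Krc_base.
have edge_copy u v : e u v <-> u != v /\ in_common_copy Hs (size Hs) u v.
  rewrite edgeE; split=> -[uv copy_uv]; split=> //.
    by have [_ /(nthP set0)[i lt_is <-] uvi] := copy_uv; exists i.
  by have [i lt_is uvi] := copy_uv; exists (nth set0 Hs i); rewrite ?mem_nth.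
elim=> {x y} [//|S x y cardS xS yS xy _ IH].
have cliqueD1 z : (z == x) || (z == y) -> prefix_clique Hs (size Hs) (S :\ z).
  move=> z_xy u v /setD1P[uz uS] /setD1P[vz vS] uv.
  suff /edge_copy[] : e u v by [].
  apply: IH => //.
  by case/orP: z_xy => /eqP zE; rewrite -zE (negbTE uz) (negbTE vz) andbF.
apply/edge_copy; split=> //.
by apply: (in_common_copy_of_cliquesD1 glued) xy (cliqueD1 _ _) (cliqueD1 _ _);
  rewrite ?cardS ?eqxx ?orbT.
Qed.
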